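(* Let $k\le l$ be positive integers with $\gcd(k,l)=1$, let $n\ge1$, $m\ge 0$ be integers, write $m=qn+r$ with integers $q\ge 0$, $0\le r<n$, and let $A\in\mathcal D^{k,l}(m,n)$. Let $W$ be a submatrix of $A$ (on a set of rows $I$ and set of columns $J$) all of whose entries are at most $q$, with $|I|+|J|$ as large as possible among all such submatrices. After permuting rows and columns write $$A=\begin{pmatrix}X&Y\\ Z&W\end{pmatrix},$$ where $X$ has size $t_1\times t_2$ (so $t_1=nk-|I|$, $t_2=nl-|J|$), $Y$ has size $t_1\times |J|$ and $Z$ has size $|I|\times t_2$. If $t_1+t_2\le nk$, then $${\rm tdet}(A)\ge \min\bigl(nk(q+1),\ {\rm tdet}(Y)+{\rm tdet}(Z)+(nk-t_1-t_2)q\bigr).$$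
   Context: $\mathcal D^{k,l}(m,n)$ denotes the set of all $nk\times nl$ matrices with nonnegative integer entries all of whose row sums equal $ml$ and all of whose column sums equal $mk$. For an $s\times t$ matrix $A=(a_{ij})$ with $s\le t$, a transversal of $A$ is a set of entries $T=\{a_{1i_1},\dots,a_{si_s}\}$ with $i_1,\dots,i_s\in\{1,\dots,t\}$ pairwise distinct, and $|T|=a_{1i_1}+\cdots+a_{si_s}$; if $s>t$, the transversals of $A$ are those of its transpose. The tropical determinant is ${\rm tdet}(A)=\max_T|T|$ over all transversals $T$ of $A$; a matrix with no rows or no columns has tropical determinant $0$. The tropical determinant is invariant under row and column permutations. *)

From mathcomp Require Import all_boot all_order all_algebra.
Unset Printing Implicit Defensive.

Definition inD (k l m n : nat) (A : 'M[nat]_(n * k, n * l)) : Prop :=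
  (forall i, \sum_j A i j = m * l) /\ (forall j, \sum_i A i j = m * k).

Definition tdet {s t : nat} (A : 'M[nat]_(s, t)) : nat :=
  if s <= t then
    \max_(f : {ffun 'I_s -> 'I_t} | injectiveb f) \sum_(i < s) A i (f i)
  else
    \max_(f : {ffun 'I_t -> 'I_s} | injectiveb f) \sum_(j < t) A (f j) j.

Definition tsubmx {s t : nat} (A : 'M[nat]_(s, t)) (R : {set 'I_s}) (C : {set 'I_t})
  : 'M[nat]_(#|R|, #|C|) :=
  \matrix_(i < #|R|, j < #|C|) A (enum_val i) (enum_val j).

Definition bounded_sub {s t : nat} (A : 'M[nat]_(s, t)) (R : {set 'I_s}) (C : {set 'I_t})
  (q : nat) : Prop :=
  forall i j, i \in R -> j \in C -> A i j <= q.

(* Egervary's theorem: for a square nonnegative integer matrix, the largest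
   weight of a transversal equals the least weight sum_i u_i + sum_j v_j of an
   integer cover A_ij <= u_i + v_j; it follows from Hall's theorem by descent on
   the weight of a cover.  Padding A with zero rows and shifting the potentials
   gives a nonnegative cover (u, v) of A of weight at most tdet A with some
   v_j0 = 0.  If some u_i0 < q, the sums of column j0 and of row i0 (mk >= qnk
   and ml >= qnl) already force the weight to be at least nk(q+1).  Otherwise
   every u_i >= q, and bounding tdet Y and tdet Z by the potentials on their own
   rows and columns, each row of Z missed by a transversal still contributing at
   least q, gives the second bound.  In particular neither the maximality of W,
   nor the bound on its entries, nor the coprimality of k and l, nor
   t1 + t2 <= nk is needed. *)

From mathcomp Require Import all_boot all_order all_algebra.
From mathcomp Require Import zify.
Import Order.TTheory GRing.Theory Num.Theory.

Set Implicit Arguments.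
Unset Strict Implicit.
Unset Printing Implicit Defensive.

Section Hall.

Variables (R C : finType) (adj : R -> C -> bool).

Definition neighbours (Y : {set C}) (S : {set R}) : {set C} :=
  [set y in Y | [exists x in S, adj x y]].

Definition hall_condition (X : {set R}) (Y : {set C}) : Prop :=
  forall S : {set R}, S \subset X -> #|S| <= #|neighbours Y S|.

Definition matching (f : R -> C) (X : {set R}) (Y : {set C}) : Prop :=
  {in X, forall x, (f x \in Y) && adj x (f x)} /\ {in X &, injective f}.

Lemma matching_neighbours f X Y : matching f X Y -> matching f X (neighbours Y X).
Proof.
case=> fXY fI; split=> // x xX; have /andP[fxY axfx] := fXY x xX.
by rewrite inE fxY axfx andbT; apply/existsP; exists x; rewrite xX.
Qed.

Lemma matching_glue f1 f2 (X1 X : {set R}) (Y1 Y : {set C}) :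
  X1 \subset X -> Y1 \subset Y ->
  matching f1 X1 Y1 -> matching f2 (X :\: X1) (Y :\: Y1) ->
  matching (fun x => if x \in X1 then f1 x else f2 x) X Y.
Proof.
move=> sX1X sY1Y [f1P f1I] [f2P f2I].
have f2X x : x \in X -> x \notin X1 -> (f2 x \in Y :\: Y1) && adj x (f2 x).
  by move=> xX xX1; apply: f2P; rewrite inE xX1.
split=> [x xX | x1 x2 x1X x2X] /=.
  case: ifP => [xX1 | /negbT xX1]; last by have /andP[/setDP[]] := f2X x xX xX1 => -> _ ->.
  by have /andP[fxY ->] := f1P x xX1; rewrite (subsetP sY1Y).
have f1Y1 x : x \in X1 -> f1 x \in Y1 by move=> xX1; have /andP[] := f1P x xX1.
have f2Y1 x : x \in X -> x \notin X1 -> f2 x \notin Y1.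
  by move=> xX xX1; have /andP[/setDP[]] := f2X x xX xX1.
case: ifP => [x1X1 | /negbT x1X1]; case: ifP => [x2X1 | /negbT x2X1].
- exact: f1I.
- by move=> e; have := f2Y1 x2 x2X x2X1; rewrite -e f1Y1.
- by move=> e; have := f2Y1 x1 x1X x1X1; rewrite e f1Y1.
- by apply: f2I; rewrite inE ?x1X1 ?x2X1.
Qed.

Lemma hall_critical X Y (S : {set R}) : hall_condition X Y -> S \subset X ->
  #|neighbours Y S| <= #|S| -> hall_condition (X :\: S) (Y :\: neighbours Y S).
Proof.
move=> hall sSX critS T /subsetDP[sTX dTS].
have := hall (T :|: S); rewrite subUset sTX sSX cardsU (disjoint_setI0 dTS) cards0 subn0.
have : neighbours Y (T :|: S) \subset neighbours (Y :\: neighbours Y S) T :|: neighbours Y S.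
  apply/subsetP => y; rewrite !inE => /andP[yY /existsP[x /andP[]]].
  rewrite inE => /orP[xT|xS] axy; last first.
    by rewrite yY; apply/orP; right; apply/existsP; exists x; rewrite xS.
  rewrite yY /=; case: [exists x, _] => //=; rewrite orbF.
  by apply/existsP; exists x; rewrite xT.
move=> /subset_leq_card.
have /leq_of_leqif := leq_card_setU (neighbours (Y :\: neighbours Y S) T) (neighbours Y S).
move=> cardU cardN /(_ isT); lia.
Qed.

Lemma hall_surplus (X : {set R}) (Y : {set C}) x0 y0 :
  (forall S : {set R}, S \subset X -> S != set0 -> S != X -> #|S| < #|neighbours Y S|) ->
  x0 \in X -> hall_condition (X :\ x0) (Y :\ y0).
Proof.
move=> surplus x0X T sTX; have [-> | T0] := eqVneq T set0; first by rewrite cards0.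
have /subsetDP[sTX' dTx0] := sTX.
have TX : T != X by apply: contraTneq dTx0 => ->; rewrite disjoint_sym disjoints1 x0X.
have := surplus T sTX' T0 TX.
have : neighbours Y T \subset y0 |: neighbours (Y :\ y0) T.
  by apply/subsetP => y; rewrite !inE => /andP[-> ->]; rewrite !andbT orbN.
move/subset_leq_card; rewrite cardsU1; lia.
Qed.

Theorem hall_marriage (c0 : C) X Y : hall_condition X Y -> exists f, matching f X Y.
Proof.
have [n] := ubnP #|X|; elim: n X Y => // n IH X Y /ltnSE cardX hall.
have [-> | X0] := eqVneq X set0; first by exists (fun _ => c0); split=> x; rewrite inE.
have ltX (S : {set R}) : S \subset X -> S != set0 -> #|X :\: S| < n.
  move=> sSX; have := subset_leq_card sSX; rewrite -card_gt0 cardsD (setIidPr sSX); lia.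
case: (boolP [exists S : {set R}, [&& S \subset X, S != set0, S != X & #|neighbours Y S| <= #|S|]]).
- case/existsP => S /and4P[sSX S0 SX critS].
  have ltS : #|S| < n by apply: leq_trans (proper_card _) cardX; rewrite properEneq SX.
  have [f1 /matching_neighbours mf1] := IH S Y ltS (fun T sTS => hall T (subset_trans sTS sSX)).
  have [f2 mf2] := IH _ _ (ltX S sSX S0) (hall_critical hall sSX critS).
  by exists (fun x => if x \in S then f1 x else f2 x); apply: matching_glue mf1 mf2;
    rewrite //; apply/subsetP => y /setIdP[].
- move/existsPn => noCrit; have [x0 x0X] := set0Pn _ X0.
  have : 0 < #|neighbours Y [set x0]| by rewrite -(cards1 x0) hall ?sub1set.
  case/card_gt0P => y0; rewrite inE => /andP[y0Y /existsP[_ /andP[/set1P-> ax0y0]]].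
  have surplus (S : {set R}) : S \subset X -> S != set0 -> S != X -> #|S| < #|neighbours Y S|.
    by move=> sSX S0 SX; have := noCrit S; rewrite sSX S0 SX ltnNge.
  have sx0X : [set x0] \subset X by rewrite sub1set.
  have x00 : [set x0] != set0 by apply/set0Pn; exists x0; rewrite inE.
  have [f2 mf2] := IH _ _ (ltX _ sx0X x00) (hall_surplus y0 surplus x0X).
  exists (fun x => if x \in [set x0] then y0 else f2 x); apply: matching_glue mf2 => //.
  - by rewrite sub1set.
  - by split=> [x /set1P-> | x1 x2 /set1P-> /set1P-> //]; rewrite inE eqxx.
Qed.

End Hall.

Section Egervary.

Local Open Scope ring_scope.

Lemma sum_indicator (T : finType) (S : {set T}) :
  \sum_i (i \in S)%:Z = #|S|%:Z.
Proof.
rewrite (eq_bigr (fun i => if i \in S then 1 else 0)) => [|i _]; last by case: (i \in S).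
by rewrite -big_mkcond sumr_const natz.
Qed.

Variables (R C : finType) (B : R -> C -> nat).
Hypothesis cardRC : #|R| = #|C|.

Definition covers (u : R -> int) (v : C -> int) : Prop :=
  forall i j, (B i j)%:Z <= u i + v j.

Definition cover_weight (u : R -> int) (v : C -> int) : int :=
  \sum_i u i + \sum_j v j.

Definition tight (u : R -> int) (v : C -> int) i j : bool := u i + v j == (B i j)%:Z.

Lemma sum_reindex_inj (f : R -> C) (F : C -> int) :
  injective f -> \sum_i F (f i) = \sum_j F j.
Proof.
move=> fI; rewrite [RHS](reindex f) //.
by apply/onW_bij/inj_card_bij; rewrite ?cardRC.
Qed.

Lemma cover_weight_matching u v f :
  injective f -> cover_weight u v = \sum_i (u i + v (f i)).
Proof. by move=> fI; rewrite big_split /= sum_reindex_inj. Qed.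

Lemma matching_le_cover_weight u v f : covers u v -> injective f ->
  \sum_i (B i (f i))%:Z <= cover_weight u v.
Proof. by move=> cov fI; rewrite (cover_weight_matching u v fI); apply: ler_sum. Qed.

Lemma cover_weight_ge0 u v : covers u v -> 0 <= cover_weight u v.
Proof.
move=> cov; pose f i := enum_val (cast_ord cardRC (enum_rank i)).
have fI : injective f by move=> i1 i2 /enum_val_inj/cast_ord_inj/enum_rank_inj.
by apply: le_trans (matching_le_cover_weight cov fI); apply: sumr_ge0.
Qed.

Lemma cover_descent u v (S : {set R}) : covers u v ->
  (#|neighbours (tight u v) setT S| < #|S|)%N ->
  exists u' v', covers u' v' /\ cover_weight u' v' < cover_weight u v.
Proof.
set NS := neighbours _ _ S => cov ltNS.
exists (fun i => u i - (i \in S)%:Z), (fun j => v j + (j \in NS)%:Z); split.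
  move=> i j; have := cov i j; case iS: (i \in S); case jN: (j \in NS) => //=; try lia.
  suff : ~~ tight u v i j by rewrite /tight; lia.
  by apply: contraFN jN => tij; rewrite inE in_setT; apply/existsP; exists i; rewrite iS.
rewrite /cover_weight sumrB big_split /= !sum_indicator.
set a := \sum_i u i; set b := \sum_i v i; clearbody NS; lia.
Qed.

Theorem egervary (c0 : C) : exists u v f,
  [/\ covers u v, injective f & cover_weight u v = \sum_i (B i (f i))%:Z].
Proof.
have [u0 [v0 cov0]] : exists u0 v0, covers u0 v0.
  exists (fun i => (\sum_j B i j)%:Z), (fun _ => 0) => i j.
  by rewrite addr0 lez_nat (bigD1 j) //= leq_addr.
have [n] := ubnP `|cover_weight u0 v0|.
elim: n u0 v0 cov0 => // n IH u v cov /ltnSE weight_n.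
case: (boolP [forall S : {set R}, #|S| <= #|neighbours (tight u v) setT S|]%N).
- move=> /forallP hall.
  have [f [tightf fI]] := hall_marriage c0 (fun S (_ : S \subset setT) => hall S).
  have {}fI : injective f by move=> x y; apply: fI; rewrite inE.
  exists u, v, f; split=> //; rewrite (cover_weight_matching u v fI).
  by apply: eq_bigr => i _; apply/eqP; have /andP[] := tightf i (in_setT i).
- case/forallPn => S; rewrite -ltnNge => /(cover_descent cov) [u' [v' [cov' lt_weight]]].
  by apply: (IH u' v' cov'); have := cover_weight_ge0 cov'; lia.
Qed.

Lemma egervary_nat (c0 : C) : exists (u : R -> nat) (v : C -> nat) f j0,
  [/\ injective f, forall i j, (B i j <= u i + v j)%N, v j0 = 0%N
    & (\sum_i u i + \sum_j v j = \sum_i B i (f i))%N].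
Proof.
have [u [v [f [cov fI weight]]]] := egervary c0.
case: (@arg_minP _ _ _ c0 xpredT v isT) => j0 _ v_min.
have u_abs i : (absz (u i + v j0))%:Z = u i + v j0.
  by have := cov i j0; lia.
have v_abs j : (absz (v j - v j0))%:Z = v j - v j0.
  by have := v_min j isT; lia.
exists (fun i => absz (u i + v j0)), (fun j => absz (v j - v j0)), f, j0; split=> //.
- by move=> i j; rewrite -lez_nat PoszD u_abs v_abs; have := cov i j; lia.
- by rewrite subrr.
apply/eqP; rewrite -eqz_nat PoszD !(big_morph Posz PoszD (erefl 0%:Z)) -weight.
under eq_bigr do rewrite u_abs; under [X in _ + X == _]eq_bigr do rewrite v_abs.
by rewrite big_split sumrB /= !sumr_const cardRC addrACA subrr addr0.
Qed.

End Egervary.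

Lemma sum_setC_split (T : finType) (S : {set T}) (F : T -> nat) :
  \sum_i F i = \sum_(i in S) F i + \sum_(i in ~: S) F i.
Proof. by rewrite (bigID (mem S)); congr (_ + _); apply: eq_bigl => i; rewrite !inE. Qed.

Lemma sum_inj_add_le (I J : finType) (f : I -> J) (G : J -> nat) q :
  injective f -> (forall j, q <= G j) ->
  \sum_i G (f i) + q * (#|J| - #|I|) <= \sum_j G j.
Proof.
move=> fI qG.
have -> : \sum_i G (f i) = \sum_(j in f @: setT) G j.
  by rewrite big_imset /=; [apply: eq_bigl => i; rewrite inE | exact: in2W].
have card_compl : #|~: (f @: setT)| = #|J| - #|I|.
  by rewrite cardsCs setCK card_imset // cardsT.
rewrite [X in _ <= X](bigID (mem (f @: setT))) /= leq_add2l -card_compl mulnC -sum_nat_const.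
by rewrite (eq_bigl (fun j => j \notin f @: setT)) => [|j]; [apply: leq_sum | rewrite inE].
Qed.

Lemma tdet_le_cover s t (B : 'M[nat]_(s, t)) u v q :
  (forall i j, B i j <= u i + v j) -> (forall i, q <= u i) ->
  tdet B + q * (s - t) <= \sum_i u i + \sum_j v j.
Proof.
move=> cov qu.
have q_le : q * (s - t) <= \sum_i u i + \sum_j v j.
  apply: leq_trans (leq_addr _ _); apply: leq_trans (_ : q * s <= _).
    by rewrite leq_mul2l leq_subr orbT.
  by rewrite -{1}[s]card_ord mulnC -sum_nat_const; apply: leq_sum.
rewrite addnC -leq_subRL // /tdet; case: (leqP s t) => st; apply/bigmax_leqP => f /injectiveP fI.
  rewrite leq_subRL // (_ : s - t = 0) ?muln0 ?add0n; last exact/eqP.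
  apply: leq_trans (leq_sum _ (fun i _ => cov i (f i))) _; rewrite big_split leq_add2l.
  by have := sum_inj_add_le fI (fun j => leq0n (v j)); rewrite mul0n addn0.
rewrite leq_subRL //; apply: leq_trans (_ : q * (s - t) + \sum_j (u (f j) + v j) <= _).
  by rewrite leq_add2l; apply: leq_sum => j _; apply: cov.
rewrite big_split /= addnA [q * _ + _]addnC leq_add2r.
by have := sum_inj_add_le fI qu; rewrite !card_ord.
Qed.

Lemma tdet_tsubmx_le_cover s t (A : 'M[nat]_(s, t)) u v q (R : {set 'I_s}) (C : {set 'I_t}) :
  (forall i j, A i j <= u i + v j) -> (forall i, q <= u i) ->
  tdet (tsubmx A R C) + q * (#|R| - #|C|) <= \sum_(i in R) u i + \sum_(j in C) v j.
Proof.
move=> cov qu; rewrite [\sum_(i in R) _]big_enum_val [\sum_(j in C) _]big_enum_val.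
by apply: tdet_le_cover => [i j | i]; rewrite ?mxE.
Qed.

Lemma exists_cover_le_tdet N M (A : 'M[nat]_(N, M)) : N <= M -> 0 < M ->
  exists u v j0, [/\ forall i j, A i j <= u i + v j, v j0 = 0
    & \sum_i u i + \sum_j v j <= tdet A].
Proof.
move=> NM M_gt0.
pose B (x : 'I_N + 'I_(M - N)) j := if x is inl i then A i j else 0.
have cardB : #|{: 'I_N + 'I_(M - N)}| = #|'I_M| by rewrite card_sum !card_ord subnKC.
have [u [v [f [j0 [fI cov vj0 weight]]]]] := egervary_nat B cardB (Ordinal M_gt0).
exists (fun i => u (inl i)), v, j0; split=> // [i j | ]; first exact: cov (inl i) j.
have gI : injectiveb [ffun i => f (inl i)] by apply/injectiveP => i1 i2; rewrite !ffunE => /fI [].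
rewrite /tdet NM; apply: leq_trans (leq_bigmax_cond _ gI).
move: weight; rewrite !big_sumType /= big1_eq addn0 => weight.
under [X in _ <= X]eq_bigr do rewrite ffunE.
by rewrite -weight -addnA leq_add2l leq_addl.
Qed.

Lemma inD_cover_weight_small_row k l m n (A : 'M[nat]_(n * k, n * l)) u v j0 i0 :
  k <= l -> inD k l m n A -> (forall i j, A i j <= u i + v j) -> v j0 = 0 ->
  u i0 < m %/ n -> n * k * (m %/ n).+1 <= \sum_i u i + \sum_j v j.
Proof.
move=> kl [row_sum col_sum] cov vj0 small; set q := m %/ n.
have qn_le : q * n <= m := leq_divM m n.
have col_le : q * (n * k) <= \sum_i u i.
  apply: leq_trans (_ : \sum_i A i j0 <= _); last first.
    by apply: leq_sum => i _; rewrite -[u i]addn0 -vj0 cov.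
  by rewrite col_sum mulnA leq_mul2r qn_le orbT.
have row_le : q * (n * l) <= n * l * u i0 + \sum_j v j.
  apply: leq_trans (_ : \sum_j A i0 j <= _).
    by rewrite row_sum mulnA leq_mul2r qn_le orbT.
  have -> : n * l * u i0 = \sum_(j < n * l) u i0 by rewrite sum_nat_const card_ord.
  by rewrite -big_split; apply: leq_sum => j _; apply: cov.
have NM : n * k <= n * l by rewrite leq_mul2l kl orbT.
have : n * l * (u i0).+1 <= n * l * q by rewrite leq_mul2l small orbT.
nia.
Qed.

Lemma cover_weight_ge_blocks N M (A : 'M[nat]_(N, M)) (I : {set 'I_N}) (J : {set 'I_M}) u v q :
  (forall i j, A i j <= u i + v j) -> (forall i, q <= u i) ->
  tdet (tsubmx A (~: I) J) + tdet (tsubmx A I (~: J)) + (N - (N - #|I|) - (M - #|J|)) * q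
    <= \sum_i u i + \sum_j v j.
Proof.
move=> cov qu.
have := tdet_tsubmx_le_cover (~: I) J cov qu.
have := tdet_tsubmx_le_cover I (~: J) cov qu.
have -> : N - (N - #|I|) - (M - #|J|) = #|I| - #|~: J|.
  by have := cardsC I; have := cardsC J; rewrite !card_ord; lia.
rewrite (sum_setC_split I) (sum_setC_split J) [_ * q]mulnC.
set qZ := q * (#|I| - _); set qY := q * (#|~: I| - _); lia.
Qed.

Theorem lemma2p5 (k l n m : nat) (A : 'M[nat]_(n * k, n * l))
  (I : {set 'I_(n * k)}) (J : {set 'I_(n * l)}) :
  0 < k -> k <= l -> coprime k l -> 0 < n ->
  inD k l m n A ->
  bounded_sub A I J (m %/ n) ->
  (forall (I' : {set 'I_(n * k)}) (J' : {set 'I_(n * l)}),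
      bounded_sub A I' J' (m %/ n) -> #|I'| + #|J'| <= #|I| + #|J|) ->
  (n * k - #|I|) + (n * l - #|J|) <= n * k ->
  minn (n * k * (m %/ n).+1)
       (tdet (tsubmx A (~: I) J) + tdet (tsubmx A I (~: J))
        + (n * k - (n * k - #|I|) - (n * l - #|J|)) * (m %/ n))
  <= tdet A.
Proof.
move=> k_gt0 kl _ n_gt0 DA _ _ _.
have NM : n * k <= n * l by rewrite leq_mul2l kl orbT.
have M_gt0 : 0 < n * l by rewrite muln_gt0 n_gt0 (leq_trans k_gt0 kl).
have [u [v [j0 [cov vj0 weight]]]] := exists_cover_le_tdet A NM M_gt0.
apply: leq_trans weight.
case: (boolP [exists i, u i < m %/ n]) => [/existsP[i0 small] | /existsPn large].
  exact: leq_trans (geq_minl _ _) (inD_cover_weight_small_row kl DA cov vj0 small).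
apply: leq_trans (geq_minr _ _) (cover_weight_ge_blocks I J cov _) => i.
by rewrite leqNgt large.
Qed.
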